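(* Let $\Omega\subset\mathbb{R}^n$ be a bounded open set, $K\subset\Omega$ a non-empty compact set, and $\lambda>0$. Let $f(x)=\mathrm{dist}^2(x,K\cup\Omega^c)$ and let $f^{-}_{\overline\Omega}:\overline\Omega\to\mathbb{R}$ equal $f$ on $\Omega$ and $\inf_\Omega f$ on $\partial\Omega$. Then for every $x\in\overline\Omega$, $$\mathcal{M}(\lambda;K\cup\Omega^c)(x)=(1+\lambda)\Big(f^{-}_{\overline\Omega}(x)-C^l_{\lambda,\Omega}(f^{-}_{\overline\Omega})(x)\Big).$$
   Context: $\Omega^c=\mathbb{R}^n\setminus\Omega$; $\mathrm{dist}(x,A)=\inf_{y\in A}|x-y|$. For a nonempty closed set $F$, the quadratic multiscale medial axis map is $\mathcal{M}(\lambda;F)(x)=(1+\lambda)\big(\mathrm{dist}^2(x;F)-C^l_\lambda(\mathrm{dist}^2(\cdot;F))(x)\big)$ for $x\in\mathbb{R}^n$, where $C^l_\lambda(g)(x)=\mathrm{co}[g+\lambda|\cdot|^2](x)-\lambda|x|^2$ and $\mathrm{co}$ is the convex envelope. For bounded $g:\overline\Omega\to\mathbb{R}$ and $x\in\overline\Omega$: $M_{\lambda,\Omega}(g)(x)=\inf_{y\in\overline\Omega}\{g(y)+\lambda|y-x|^2\}$, $M^{\lambda}_{\Omega}(g)(x)=\sup_{y\in\overline\Omega}\{g(y)-\lambda|y-x|^2\}$, and $C^l_{\lambda,\Omega}(g)(x)=M^{\lambda}_{\Omega}(M_{\lambda,\Omega}(g))(x)$. *)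

From HB Require Import structures.
From mathcomp Require Import all_boot all_order all_algebra.
From mathcomp Require Import all_classical all_reals all_analysis.
Set Implicit Arguments. Unset Strict Implicit. Unset Printing Implicit Defensive.
Import Order.TTheory GRing.Theory Num.Theory.
Import numFieldNormedType.Exports.
Local Open Scope classical_set_scope.
Local Open Scope ring_scope.

Section Defs.
Context {R : realType} {n : nat}.
Notation V := 'rV[R]_n.

Definition sqnorm (x : V) : R := \sum_(i < n) (x ord0 i) ^+ 2.
Definition enorm (x : V) : R := Num.sqrt (sqnorm x).

Definition dist (x : V) (A : set V) : R := inf [set enorm (x - y) | y in A].
Definition dist2 (A : set V) (x : V) : R := dist x A ^+ 2.

Definition convex_fun (h : V -> R) : Prop :=
  forall (x y : V) (t : R), 0 <= t <= 1 ->
    h (t *: x + (1 - t) *: y) <= t * h x + (1 - t) * h y.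

Definition co (g : V -> R) (x : V) : R :=
  sup [set r | exists h : V -> R, [/\ convex_fun h, (forall y, h y <= g y) & r = h x]].

Definition Cl (lam : R) (g : V -> R) (x : V) : R :=
  co (fun y => g y + lam * sqnorm y) x - lam * sqnorm x.

Definition medial (lam : R) (F : set V) (x : V) : R :=
  (1 + lam) * (dist2 F x - Cl lam (dist2 F) x).

Definition Minf (lam : R) (Om : set V) (g : V -> R) (x : V) : R :=
  inf [set g y + lam * sqnorm (y - x) | y in closure Om].
Definition Msup (lam : R) (Om : set V) (g : V -> R) (x : V) : R :=
  sup [set g y - lam * sqnorm (y - x) | y in closure Om].
Definition ClOm (lam : R) (Om : set V) (g : V -> R) (x : V) : R :=
  Msup lam Om (Minf lam Om g) x.

Definition fminus (Om : set V) (f : V -> R) (x : V) : R :=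
  if `[< Om x >] then f x else inf [set f y | y in Om].

End Defs.

From HB Require Import structures.
From mathcomp Require Import all_boot all_order all_algebra.
From mathcomp Require Import all_classical all_reals all_analysis.
From mathcomp Require Import ring lra.
Import Order.TTheory GRing.Theory Num.Theory.
Import numFieldNormedType.Exports.
Local Open Scope classical_set_scope.
Local Open Scope ring_scope.

(* Since K ⊆ Ω, f = dist²(·, K ∪ Ωᶜ) vanishes off Ω and somewhere in Ω, so f⁻ = f.
   Every convex function on Rⁿ has an affine minorant exact at any given point (a
   subgradient, built one coordinate at a time by squeezing a slope between the left
   and right difference quotients). Hence co(f + λ|·|²) is the supremum of the affine
   minorants z ↦ c + 2λ⟨z, y⟩ of f + λ|·|², and such a minorant exists exactly when
   c + λ|y|² ≤ inf_z (f z + λ|z − y|²). This writes C^l_λ f as a sup-inf over all of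
   Rⁿ, and both can be restricted to closure Ω: for y ∈ closure Ω a point z ∉ Ω is
   beaten by the point where [y, z] leaves Ω, and a y ∉ closure Ω contributes at most
   0 ≤ M_{λ,Ω} f (x). *)

Section MultiscaleMedialAxis.
Local Set Implicit Arguments.
Local Unset Strict Implicit.

Lemma segment_meets_boundary (R : realType) (V : normedModType R) (Om : set V) (y z : V) :
  open Om -> Om y -> ~ Om z ->
  exists t : R, [/\ 0 <= t <= 1, closure Om (y + t *: (z - y)) & ~ Om (y + t *: (z - y))].
Proof.
move=> Om_open Oy Nz; apply: contrapT => noB.
(* Otherwise the preimage of Om is a nonempty clopen subset of [0, 1] missing 1. *)
pose phi t : V := y + t *: (z - y).
have phi_cont : continuous phi.
  by move=> t; apply: cvgD; [exact: cvg_cst | exact: scalel_continuous].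
have inOm : `[0, 1]%classic `&` (phi @^-1` Om) = `[0, 1]%classic.
  apply: segment_connected.
  - by exists 0; split; rewrite /= ?in_itv /= ?lexx ?ler01 // /phi scale0r addr0.
  - by exists (phi @^-1` Om) => //; exact: open_comp.
  - exists (phi @^-1` closure Om); first by apply: preimage_closed => //; exact: closed_closure.
    rewrite eqEsubset; split => t [t01 Pt]; split => //; first exact: subset_closure.
    by apply: contrapT => nO; apply: noB; exists t; split.
have : (`[0, 1] `&` (phi @^-1` Om)) 1 by rewrite inOm /= in_itv /= ler01 lexx.
by case=> _; rewrite /phi /= scale1r addrC subrK.
Qed.

Lemma inf_eq_lbound (R : realType) (E : set R) (x : R) : E x -> lbound E x -> inf E = x.
Proof.
move=> Ex x_lb; apply/eqP; rewrite eq_le lb_le_inf //; last by exists x.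
by rewrite andbT; apply: ge_inf => //; exists x.
Qed.

Section DotProduct.
Context {R : realType} {n : nat}.
Notation V := 'rV[R]_n.
Implicit Types (p q v w : V) (a : R).

Definition dotv (p v : V) : R := \sum_(i < n) p ord0 i * v ord0 i.

Lemma dotvC p v : dotv p v = dotv v p.
Proof. by apply: eq_bigr => i _; rewrite mulrC. Qed.
Lemma dotvD p v w : dotv p (v + w) = dotv p v + dotv p w.
Proof. by rewrite /dotv -big_split; apply: eq_bigr => i _; rewrite mxE mulrDr. Qed.
Lemma dotvZ p a v : dotv p (a *: v) = a * dotv p v.
Proof. by rewrite /dotv mulr_sumr; apply: eq_bigr => i _; rewrite mxE mulrCA. Qed.
Lemma dotvN p v : dotv p (- v) = - dotv p v.
Proof. by rewrite -scaleN1r dotvZ mulN1r. Qed.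
Lemma dotvB p v w : dotv p (v - w) = dotv p v - dotv p w.
Proof. by rewrite dotvD dotvN. Qed.
Lemma dotDv p q v : dotv (p + q) v = dotv p v + dotv q v.
Proof. by rewrite dotvC dotvD -!(dotvC v). Qed.
Lemma dotZv a p v : dotv (a *: p) v = a * dotv p v.
Proof. by rewrite dotvC dotvZ dotvC. Qed.
Lemma dotNv p v : dotv (- p) v = - dotv p v.
Proof. by rewrite dotvC dotvN dotvC. Qed.
Lemma dot0v v : dotv 0 v = 0.
Proof. by rewrite -(scale0r 0) dotZv mul0r. Qed.
Lemma dotv_delta p (k : 'I_n) : dotv p (delta_mx ord0 k) = p ord0 k.
Proof.
rewrite /dotv (bigD1 k) //= big1 ?addr0; first by rewrite mxE !eqxx mulr1.
by move=> i /negbTE ik; rewrite mxE ik andbF mulr0.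
Qed.

Lemma sqnorm_dotv v : sqnorm v = dotv v v.
Proof. by apply: eq_bigr => i _; rewrite expr2. Qed.
Lemma sqnorm_ge0 v : 0 <= sqnorm v.
Proof. by apply: sumr_ge0 => i _; exact: sqr_ge0. Qed.
Lemma sqnormZ a v : sqnorm (a *: v) = a ^+ 2 * sqnorm v.
Proof. by rewrite !sqnorm_dotv dotvZ dotZv mulrA expr2. Qed.
Lemma sqnorm0 : sqnorm (0 : V) = 0.
Proof. by rewrite -(scale0r 0) sqnormZ expr0n mul0r. Qed.
Lemma sqnormB v w : sqnorm (v - w) = sqnorm v - 2 * dotv v w + sqnorm w.
Proof. by rewrite !sqnorm_dotv !dotvB !dotDv !dotNv (dotvC w v); ring. Qed.
Lemma sqnormBC v w : sqnorm (v - w) = sqnorm (w - v).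
Proof. by rewrite !sqnormB (dotvC v w); ring. Qed.

Lemma convex_affine (c : R) (p : V) : convex_fun (fun z => c + dotv p z).
Proof. by move=> a b t _; rewrite dotvD !dotvZ; lra. Qed.

End DotProduct.

Section Subgradient.
Context {R : realType} {n : nat}.
Notation V := 'rV[R]_n.
Variables (h : V -> R) (x : V).
Hypothesis h_convex : convex_fun h.

Definition supported_below (k : nat) (v : V) := forall i : 'I_n, (k <= i)%N -> v ord0 i = 0.

Definition subgradient_on (k : nat) (p : V) :=
  forall v, supported_below k v -> h x + dotv p v <= h (x + v).

Lemma convex_slopes_le k (p e w w' : V) (s t : R) :
  subgradient_on k p ->
  supported_below k w -> supported_below k w' -> 0 < s -> 0 < t ->
  (h x + dotv p w' - h (x + (w' - s *: e))) / s <=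
  (h (x + (w + t *: e)) - h x - dotv p w) / t.
Proof.
move=> p_sub Sw Sw' s_gt0 t_gt0.
have st_neq0 : s + t != 0 by rewrite gt_eqF ?addr_gt0.
pose a := t / (s + t).
have a01 : 0 <= a <= 1.
  by rewrite divr_ge0 ?ler_pdivrMr ?mul1r ?lerDr ?ltW ?addr_gt0.
pose u := a *: w' + (1 - a) *: w.
have Su : supported_below k u by move=> i ki; rewrite !mxE Sw // Sw' // !mulr0 addr0.
have combE : a *: (x + (w' - s *: e)) + (1 - a) *: (x + (w + t *: e)) = x + u.
  by apply/rowP => i; rewrite !mxE /a; field.
have st_gt0 : 0 < s + t by rewrite addr_gt0.
have := h_convex (x + (w' - s *: e)) (x + (w + t *: e)) a01.
rewrite combE => /(le_trans (p_sub u Su)); rewrite dotvD !dotvZ.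
set A := h (x + (w' - _)); set B := h (x + (w + _)).
set P := dotv p w'; set Q := dotv p w; set hx := h x => hle.
have cleared : t * (hx + P - A) <= s * (B - hx - Q).
  have := ler_wpM2l (ltW st_gt0) hle.
  have -> : (s + t) * (hx + (a * P + (1 - a) * Q)) = (s + t) * hx + t * P + s * Q.
    by rewrite /a; field.
  have -> : (s + t) * (a * A + (1 - a) * B) = t * A + s * B by rewrite /a; field.
  lra.
rewrite ler_pdivrMr // mulrAC ler_pdivlMr //; lra.
Qed.

Lemma subgradient_extend k (kn : (k < n)%N) p :
  subgradient_on k p ->
  exists c : R, forall w t, supported_below k w ->
    h x + dotv p w + c * t <= h (x + (w + t *: delta_mx ord0 (Ordinal kn))).
Proof.
move=> p_sub; set e := delta_mx _ _.
(* Convexity puts every left slope in L below every right slope in U; c := sup L fits between. *)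
pose L := [set r | exists w s, [/\ supported_below k w, 0 < s &
                    r = (h x + dotv p w - h (x + (w - s *: e))) / s]].
pose U := [set r | exists w t, [/\ supported_below k w, 0 < t &
                    r = (h (x + (w + t *: e)) - h x - dotv p w) / t]].
have S0 : supported_below k 0 by move=> i _; rewrite mxE.
have LU l u : L l -> U u -> l <= u.
  move=> [w [s [Sw s_gt0 ->]]] [w' [t [Sw' t_gt0 ->]]].
  exact: (convex_slopes_le e p_sub Sw' Sw s_gt0 t_gt0).
have L0 : L !=set0 by exists ((h x + dotv p 0 - h (x + (0 - 1 *: e))) / 1), 0, 1.
have U0 : U ((h (x + (0 + 1 *: e)) - h x - dotv p 0) / 1) by exists 0, 1.
have L_ub : has_ubound L by exists ((h (x + (0 + 1 *: e)) - h x - dotv p 0) / 1) => l /LU; apply.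
exists (sup L) => w t Sw.
have [t_lt0|t_gt0|->] := ltgtP t 0.
- have Ltw : L ((h x + dotv p w - h (x + (w - (- t) *: e))) / (- t)).
    by exists w, (- t); rewrite oppr_gt0.
  have := ub_le_sup L_ub Ltw.
  by rewrite scaleNr opprK ler_pdivrMr ?oppr_gt0 //; lra.
- have Utw : U ((h (x + (w + t *: e)) - h x - dotv p w) / t) by exists w, t.
  have := ge_sup L0 (fun l Ll => LU _ _ Ll Utw).
  by rewrite ler_pdivlMr //; lra.
- by rewrite mulr0 addr0 scale0r addr0; exact: p_sub.
Qed.

Lemma subgradient_succ k (kn : (k < n)%N) p :
  subgradient_on k p ->
  exists p', subgradient_on k.+1 p'.
Proof.
move=> /(subgradient_extend kn) [c c_sub]; set e := delta_mx _ _ in c_sub.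
exists (p + (c - p ord0 (Ordinal kn)) *: e) => v Sv.
set t := v ord0 (Ordinal kn); set w := v - t *: e.
have Sw : supported_below k w.
  move=> i ki; rewrite !mxE; have [->|ik] := eqVneq i (Ordinal kn).
    by rewrite eqxx mulr1 subrr.
  have ki' : (k < i)%N by rewrite ltn_neqAle ki andbT eq_sym; exact: ik.
  by rewrite Sv // andbF mulr0 subrr.
have vE : v = w + t *: e by rewrite subrK.
rewrite dotDv dotZv (dotvC e) dotv_delta -/t vE dotvD dotvZ dotv_delta.
by have := c_sub w t Sw; lra.
Qed.

Lemma subgradient_below k : (k <= n)%N -> exists p, subgradient_on k p.
Proof.
elim: k => [_|k IHk kn].
  exists 0 => v Sv; have -> : v = 0 by apply/rowP => i; rewrite mxE Sv.
  by rewrite dot0v !addr0.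
have [p p_sub] := IHk (ltnW kn).
exact: (subgradient_succ kn p_sub).
Qed.

Lemma convex_affine_minorant : exists p, forall z, h x + dotv p (z - x) <= h z.
Proof.
have [p p_sub] := subgradient_below (leqnn n).
by exists p => z; rewrite -{2}(subrKC x z); apply: p_sub => i; rewrite leqNgt ltn_ord.
Qed.

End Subgradient.

Section ConvexEnvelope.
Context {R : realType} {n : nat}.
Notation V := 'rV[R]_n.

Lemma le_co (g h : V -> R) x :
  convex_fun h -> (forall y, h y <= g y) -> h x <= co g x.
Proof.
move=> h_convex h_le; apply: ub_le_sup; last by exists h.
by exists (g x) => r [h' [_ h'_le ->]].
Qed.

Lemma co_le (g : V -> R) x c : (forall y, 0 <= g y) ->
  (forall h, convex_fun h -> (forall y, h y <= g y) -> h x <= c) -> co g x <= c.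
Proof.
move=> g_ge0 c_ub; apply: ge_sup; last by move=> r [h [h_convex h_le ->]]; exact: c_ub.
by exists 0, (fun=> 0); split => // a b t _; rewrite !mulr0 addr0.
Qed.

End ConvexEnvelope.

Section SquaredDistance.
Context {R : realType} {n : nat}.
Notation V := 'rV[R]_n.

Lemma dist2_ge0 (A : set V) y : 0 <= dist2 A y.
Proof. exact: sqr_ge0. Qed.

Lemma dist2_eq0 (A : set V) y : A y -> dist2 A y = 0.
Proof.
move=> Ay; rewrite /dist2 /dist (@inf_eq_lbound _ _ 0) ?expr0n //.
  by exists y; rewrite // subrr /enorm sqnorm0 sqrtr0.
by move=> _ [z _ <-]; exact: sqrtr_ge0.
Qed.

Lemma fminus_id (Om : set V) (g : V -> R) :
  (forall y, 0 <= g y) -> (forall y, ~ Om y -> g y = 0) -> (exists2 k, Om k & g k = 0) ->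
  fminus Om g = g.
Proof.
move=> g_ge0 g_out [k Om_k gk0]; apply: funext => y; rewrite /fminus.
case: asboolP => // Ny; rewrite g_out // (@inf_eq_lbound _ _ 0) //; first by exists k.
by move=> _ [z _ <-].
Qed.

End SquaredDistance.

Section CompensatedTransform.
Context {R : realType} {n : nat}.
Notation V := 'rV[R]_n.
Variables (Om : set V) (lam : R) (g : V -> R).
Implicit Types (x y z : V) (c : R).
Hypotheses (Om_open : open Om) (lam_gt0 : 0 < lam).
Hypotheses (g_ge0 : forall y, 0 <= g y) (g_out : forall y, ~ Om y -> g y = 0).

Let mi := Minf lam Om g.

Let quad_ge0 (y : V) : 0 <= lam * sqnorm y.
Proof. by rewrite mulr_ge0 ?sqnorm_ge0 ?ltW. Qed.

Lemma Minf_le y z : closure Om z -> mi y <= g z + lam * sqnorm (z - y).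
Proof.
move=> Om_z; apply: ge_inf; last by exists z.
by exists 0 => _ [w _ <-]; rewrite addr_ge0.
Qed.

Lemma Minf_ge y c : closure Om y ->
  (forall z, closure Om z -> c <= g z + lam * sqnorm (z - y)) -> c <= mi y.
Proof.
move=> Om_y c_lb; apply: lb_le_inf => [|_ [z Om_z <-]]; last exact: c_lb.
by exists (g y + lam * sqnorm (y - y)), y.
Qed.

Lemma Minf_ge0 y : closure Om y -> 0 <= mi y.
Proof. by move=> Om_y; apply: Minf_ge => // z _; rewrite addr_ge0. Qed.

Lemma Minf_le_any y z : closure Om y -> mi y <= g z + lam * sqnorm (z - y).
Proof.
move=> Om_y; have [Om_z|Nz] := pselect (closure Om z); first exact: Minf_le.
have {}Nz : ~ Om z by move=> Oz; apply: Nz; exact: subset_closure.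
rewrite g_out // add0r.
have [Oy|Ny] := pselect (Om y); last first.
  by apply: le_trans (Minf_le y Om_y) _; rewrite g_out // subrr sqnorm0 mulr0 addr0.
have [t [/andP[t_ge0 t_le1] Om_b Nb]] := segment_meets_boundary Om_open Oy Nz.
apply: le_trans (Minf_le y Om_b) _.
rewrite g_out // add0r (addrC y) addrK sqnormZ ler_wpM2l ?(ltW lam_gt0) //.
by rewrite ler_piMl ?sqnorm_ge0 // expr_le1.
Qed.

Lemma ClOm_ub x :
  closure Om x -> has_ubound [set mi y - lam * sqnorm (y - x) | y in closure Om].
Proof.
move=> Om_x; exists (g x) => _ [y Om_y <-].
by have := Minf_le y Om_x; rewrite sqnormBC; lra.
Qed.

Lemma le_ClOm x y c : closure Om x ->
  (forall z, c <= g z + lam * sqnorm (z - y)) -> c - lam * sqnorm (y - x) <= ClOm lam Om g x.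
Proof.
move=> Om_x c_lb; have [Om_y|Ny] := pselect (closure Om y).
  apply: le_trans (ub_le_sup (ClOm_ub Om_x) _); last by exists y.
  by rewrite lerD2r; apply: Minf_ge.
have {}Ny : ~ Om y by move=> Oy; apply: Ny; exact: subset_closure.
have := c_lb y; rewrite g_out // subrr sqnorm0 mulr0 addr0 => c_le0.
apply: (@le_trans _ _ (mi x - lam * sqnorm (x - x))).
  rewrite subrr sqnorm0 mulr0 subr0; apply: le_trans (Minf_ge0 Om_x).
  by have := quad_ge0 (y - x); lra.
by apply: (ub_le_sup (ClOm_ub Om_x)); exists x.
Qed.

Let G (y : V) : R := g y + lam * sqnorm y.

Lemma co_le_ClOm x : closure Om x -> co G x - lam * sqnorm x <= ClOm lam Om g x.
Proof.
move=> Om_x; rewrite lerBlDr; apply: co_le => [y|h h_convex h_le].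
  by rewrite addr_ge0.
have [p p_sub] := convex_affine_minorant x h_convex.
have lam2_neq0 : 2 * lam != 0 by rewrite mulf_neq0 ?gt_eqF.
pose y := (2 * lam)^-1 *: p.
have py z : dotv p z = 2 * lam * dotv z y.
  by rewrite dotvZ mulrA mulfV // mul1r dotvC.
pose c := h x - dotv p x + lam * sqnorm y.
have c_lb z : c <= g z + lam * sqnorm (z - y).
  have := le_trans (p_sub z) (h_le z); rewrite /G dotvB !py sqnormB /c py; lra.
have := le_ClOm Om_x c_lb.
by rewrite /c sqnormBC sqnormB py; lra.
Qed.

Lemma ClOm_le_co x : closure Om x -> ClOm lam Om g x <= co G x - lam * sqnorm x.
Proof.
move=> Om_x; apply: ge_sup => [|_ [y Om_y <-]].
  by exists (mi x - lam * sqnorm (x - x)), x.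
pose h z := mi y - lam * sqnorm y + dotv (2 * lam *: y) z.
have h_le z : h z <= G z.
  by have := Minf_le_any z Om_y; rewrite /h /G dotZv sqnormB (dotvC z y); lra.
have := le_co x (convex_affine _ _) h_le.
by rewrite /h dotZv sqnormB (dotvC y x); lra.
Qed.

Lemma Cl_eq_ClOm x : closure Om x -> Cl lam g x = ClOm lam Om g x.
Proof.
by move=> Om_x; apply: le_anti; rewrite co_le_ClOm ?ClOm_le_co.
Qed.

End CompensatedTransform.

End MultiscaleMedialAxis.

Theorem corollary3p3 (R : realType) (n : nat) (Om K : set 'rV[R]_n) (lam : R) :
  open Om -> bounded_set Om ->
  compact K -> K !=set0 -> K `<=` Om ->
  0 < lam ->
  forall x : 'rV[R]_n, closure Om x ->
    medial lam (K `|` ~` Om) x =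
    (1 + lam) * (fminus Om (dist2 (K `|` ~` Om)) x
                 - ClOm lam Om (fminus Om (dist2 (K `|` ~` Om))) x).
Proof.
move=> Om_open _ _ [k Kk] K_Om lam_gt0 x Om_x.
set F := K `|` ~` Om.
have f_ge0 := dist2_ge0 F.
have f_out y : ~ Om y -> dist2 F y = 0 by move=> Ny; apply: dist2_eq0; right.
have f_k : dist2 F k = 0 by apply: dist2_eq0; left.
rewrite fminus_id //; last by exists k; first exact: K_Om.
by rewrite /medial (Cl_eq_ClOm Om_open lam_gt0 f_ge0 f_out Om_x).
Qed.
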